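(* Consider the distributed detection model in the context with $N\ge 2$, and let $m=\frac{N}{2N-2}$. Suppose the fusion center uses the majority rule $K^*=\lceil\frac{N+1}{2}\rceil$ and that $\alpha<\min\{0.5-P_f,\;1-m/P_d\}$. Then the maximum of the error probability $P_E$ over $(P_{1,0},P_{0,1})\in[0,1]^2$ is attained at one of the attacking strategies $(P_{1,0},P_{0,1})=(1,0)$, $(0,1)$, or $(1,1)$.
   Context: Binary hypothesis test between $H_0$ and $H_1$ with priors $P_0,P_1\in(0,1)$, $P_0+P_1=1$. There are $N$ sensors; conditionally on the hypothesis, their local decisions $v_i\in\{0,1\}$ are i.i.d. with $P(v_i=1\mid H_1)=P_d$, $P(v_i=1\mid H_0)=P_f$, where $0<P_f<P_d<1$. Each sensor independently is Byzantine with probability $\alpha\in[0,1]$. Honest nodes send $u_i=v_i$; a Byzantine node sends $u_i=1$ with probability $P_{1,0}$ when $v_i=0$ and sends $u_i=0$ with probability $P_{0,1}$ when $v_i=1$. Hence conditionally on $H_j$ the $u_i$ are i.i.d. with $P(u_i=1\mid H_0)=\pi_{1,0}=\alpha(P_{1,0}(1-P_f)+(1-P_{0,1})P_f)+(1-\alpha)P_f$ and $P(u_i=1\mid H_1)=\pi_{1,1}=\alpha(P_{1,0}(1-P_d)+(1-P_{0,1})P_d)+(1-\alpha)P_d$. A $K$-out-of-$N$ fusion rule decides $H_1$ iff at least $K$ of the $u_i$ equal $1$; its global false alarm and detection probabilities are $Q_F=\sum_{i=K}^N\binom{N}{i}\pi_{1,0}^i(1-\pi_{1,0})^{N-i}$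 and $Q_D=\sum_{i=K}^N\binom{N}{i}\pi_{1,1}^i(1-\pi_{1,1})^{N-i}$, and its error probability is $P_E=P_0Q_F+P_1(1-Q_D)$, viewed as a function of $(P_{1,0},P_{0,1})$ for fixed $\alpha$ and $K$. *)

From mathcomp Require Import all_boot all_order all_algebra.
From mathcomp Require Import reals.
Set Implicit Arguments. Unset Strict Implicit. Unset Printing Implicit Defensive.
Import Order.TTheory GRing.Theory Num.Theory.
Local Open Scope ring_scope.

Section DD.
Variable R : realFieldType.

(* P(u_i = 1 | H_0) *)
Definition pi10 (alpha Pf P10 P01 : R) : R :=
  alpha * (P10 * (1 - Pf) + (1 - P01) * Pf) + (1 - alpha) * Pf.

(* P(u_i = 1 | H_1) *)
Definition pi11 (alpha Pd P10 P01 : R) : R :=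
  alpha * (P10 * (1 - Pd) + (1 - P01) * Pd) + (1 - alpha) * Pd.

Definition tail_binom (N K : nat) (p : R) : R :=
  \sum_(K <= i < N.+1) ('C(N, i))%:R * p ^+ i * (1 - p) ^+ (N - i).

Definition QF (N K : nat) (alpha Pf P10 P01 : R) : R :=
  tail_binom N K (pi10 alpha Pf P10 P01).

Definition QD (N K : nat) (alpha Pd P10 P01 : R) : R :=
  tail_binom N K (pi11 alpha Pd P10 P01).

Definition PE (N K : nat) (P0 P1 alpha Pf Pd P10 P01 : R) : R :=
  P0 * QF N K alpha Pf P10 P01 + P1 * (1 - QD N K alpha Pd P10 P01).

End DD.

(* majority rule K* = ceil((N+1)/2), which equals floor((N+2)/2) *)
Definition Kstar (N : nat) : nat := (N.+2)./2.

From mathcomp Require Import all_boot all_order all_algebra.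
From mathcomp Require Import reals.
From mathcomp Require Import ring lra polyrcf zify.
Set Implicit Arguments. Unset Strict Implicit. Unset Printing Implicit Defensive.
Import Order.TTheory GRing.Theory Num.Theory.
Local Open Scope ring_scope.

(* Along any segment of the square of attack strategies both pi10 and pi11 are
   affine.  Under the hypotheses on alpha, pi10 stays in [0, 1/2], where the
   majority tail z |-> P(Bin(N, z) >= K* ) is convex, and pi11 stays above
   N / (2N - 2), where it is concave; its second derivative is a multiple of the
   derivative of a Bernstein polynomial, whose sign is that of K* - 1 - (N - 1) z.
   Hence P_E is convex along every segment and its maximum over the square is
   attained at a corner.  The corner (0, 0) is dominated by the point (Pd, 1 - Pd)
   of the segment from (1, 0) to (0, 1): there pi11 is the same and pi10 is larger,
   while the tail is nondecreasing. *)

Section BernsteinPolynomials.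
Variable R : comNzRingType.

Definition bernstein (n i : nat) : {poly R} := ('X^i * (1 - 'X) ^+ (n - i)) *+ 'C(n, i).

Definition tail_poly (N K : nat) : {poly R} := \sum_(K <= i < N.+1) bernstein N i.

Lemma bernstein_small (n i : nat) : (n < i)%N -> bernstein n i = 0.
Proof. by move=> ni; rewrite /bernstein bin_small. Qed.

Lemma deriv_bernsteinS (n i : nat) :
  (bernstein n.+1 i.+1)^`() = (bernstein n i - bernstein n i.+1) *+ n.+1.
Proof.
have [ni | ] := leqP i n; last first.
  by move=> ni; rewrite !bernstein_small ?subrr ?mul0rn ?deriv0 // ltnS ltnW.
rewrite /bernstein !subSS derivMn derivM derivXn deriv_exp derivB derivC derivX sub0r.
rewrite /= mulN1r mulrnAl mulrnAr mulrN -mulNrn -subnS.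
rewrite !mulrnDl -!mulrnA [(_ * n.+1)%N]mulnC mul_bin_diag.
by rewrite [(_ * n.+1)%N]mulnC (mul_bin_down n.+1 i.+1).
Qed.

Lemma deriv_tail_poly (n k : nat) : (k <= n)%N ->
  (tail_poly n.+1 k.+1)^`() = bernstein n k *+ n.+1.
Proof.
move=> kn; rewrite /tail_poly big_add1 /= raddf_sum /=.
under eq_bigr do rewrite deriv_bernsteinS.
rewrite sumrMnl (telescope_sumr_eq (fun i => - bernstein n i)) ?(leqW kn) //.
  by rewrite bernstein_small // oppr0 sub0r opprK.
by move=> i _; rewrite opprK addrC.
Qed.

Lemma horner_deriv_bernstein (n k : nat) (z : R) : (0 < k < n)%N ->
  ((bernstein n k)^`()).[z] =
    'C(n, k)%:R * z ^+ k.-1 * (1 - z) ^+ (n - k).-1 * (k%:R - n%:R * z).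
Proof.
case: k => // k /andP[_ kn]; case E: (n - k.+1)%N => [|l]; first lia.
have -> : (n%:R : R) = k.+1%:R + l.+1%:R by rewrite -natrD; congr _%:R; lia.
rewrite /bernstein E derivMn derivM derivXn deriv_exp derivB derivC derivX sub0r /=.
rewrite !(hornerMn, hornerE) /= !exprS; ring.
Qed.
End BernsteinPolynomials.

Section RealBernstein.
Variable R : realFieldType.

Lemma horner_tail_poly (N K : nat) (z : R) : (tail_poly R N K).[z] = tail_binom N K z.
Proof.
rewrite /tail_poly /tail_binom horner_sum; apply: eq_bigr => i _.
by rewrite /bernstein hornerMn !hornerE -mulr_natl mulrA.
Qed.

Lemma horner_deriv_bernstein_ge0 (n k : nat) (z : R) : (0 < k < n)%N ->
  0 <= z <= 1 -> n%:R * z <= k%:R -> 0 <= ((bernstein R n k)^`()).[z].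
Proof.
move=> kn /andP[z0 z1] nzk; rewrite horner_deriv_bernstein //.
by rewrite !mulr_ge0 ?exprn_ge0 ?subr_ge0.
Qed.

Lemma horner_deriv_bernstein_le0 (n k : nat) (z : R) : (0 < k < n)%N ->
  0 <= z <= 1 -> k%:R <= n%:R * z -> ((bernstein R n k)^`()).[z] <= 0.
Proof.
move=> kn /andP[z0 z1] knz; rewrite horner_deriv_bernstein //.
by rewrite mulr_ge0_le0 ?subr_le0 // !mulr_ge0 ?exprn_ge0 ?subr_ge0.
Qed.

End RealBernstein.

Lemma half_succ_bounds (n : nat) : (n <= ((n.+1)./2).*2 <= n.+1)%N.
Proof.
have := odd_double_half n.+1; rewrite -addnn.
by case: (odd n.+1) => /= h; apply/andP; split; lia.
Qed.

Lemma half_succ_le (n : nat) : ((n.+1)./2 <= n)%N.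
Proof. by have /andP[_] := half_succ_bounds n; rewrite -addnn; lia. Qed.

Section MajorityTail.
Variable R : realFieldType.

(* [Kstar n.+1] is convertible to [((n.+1)./2).+1]. *)
Lemma deriv2_tail_majority (n : nat) :
  (tail_poly R n.+1 (Kstar n.+1))^`()^`() = (bernstein R n (n.+1)./2)^`() *+ n.+1.
Proof. by rewrite deriv_tail_poly ?half_succ_le // derivMn. Qed.

Lemma tail_majority_convex (n : nat) (z : R) : (2 <= n)%N -> 0 <= z <= 1 / 2 ->
  0 <= ((tail_poly R n.+1 (Kstar n.+1))^`()^`()).[z].
Proof.
move=> n2 /andP[z0 z2]; have /andP[nk kn] := half_succ_bounds n.
rewrite deriv2_tail_majority hornerMn mulrn_wge0 // horner_deriv_bernstein_ge0 //.
- by move: nk kn; rewrite -addnn; lia.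
- by rewrite z0 /=; lra.
have : (n%:R : R) <= ((n.+1)./2).*2%:R by rewrite ler_nat.
rewrite -addnn natrD; have : (0 : R) <= n%:R by []; nra.
Qed.

Lemma tail_majority_concave (n : nat) (z : R) : (2 <= n)%N ->
  (n.+1)%:R <= 2 * n%:R * z -> z <= 1 ->
  ((tail_poly R n.+1 (Kstar n.+1))^`()^`()).[z] <= 0.
Proof.
move=> n2 nz z1; have /andP[nk kn] := half_succ_bounds n.
have n0 : (0 : R) < n%:R by rewrite ltr0n; lia.
rewrite deriv2_tail_majority hornerMn mulrn_wle0 // horner_deriv_bernstein_le0 //.
- by move: nk kn; rewrite -addnn; lia.
- by rewrite z1 andbT; nra.
have : ((n.+1)./2).*2%:R <= (n.+1)%:R :> R by rewrite ler_nat.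
rewrite -addnn natrD; lra.
Qed.

End MajorityTail.

Lemma horner_deriv2_comp_affine (R : comNzRingType) (p : {poly R}) (a b x : R) :
  ((p \Po (a%:P + b *: 'X))^`()^`()).[x] = b ^+ 2 * (p^`()^`()).[a + b * x].
Proof.
have dq : (a%:P + b *: 'X)^`() = b%:P by rewrite derivD derivC derivZ derivX add0r alg_polyC.
rewrite !(deriv_comp, derivM, dq) derivC mulr0 addr0.
by rewrite !(hornerE, horner_comp) -mulrA -expr2 mulrC.
Qed.

Section PolyExtremum.
Variable R : rcfType.

Lemma poly_convex_le_max (G : {poly R}) (a b t : R) :
  (forall x, x \in `]a, b[ -> 0 <= (G^`()^`()).[x]) ->
  a <= t <= b -> G.[t] <= Num.max G.[a] G.[b].
Proof.
move=> G2 /andP[le_at le_tb]; rewrite le_max.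
have inab x : a <= x <= b -> x \in `[a, b] by rewrite in_itv.
have dG_mono := ler_hornerW G2.
have [dGt | dGt] := lerP 0 G^`().[t].
- apply/orP; right.
  apply: (ler_hornerW (a := t) (b := b)); rewrite ?in_itv /= ?lexx ?le_at ?le_tb //.
  move=> x; rewrite in_itv /= => /andP[tx xb]; apply: (le_trans dGt).
  by apply: dG_mono; rewrite ?inab ?le_at ?le_tb ?(le_trans le_at (ltW tx)) ?ltW.
- apply/orP; left; rewrite -lerN2 -!hornerN.
  apply: (ler_hornerW (a := a) (b := t)); rewrite ?in_itv /= ?lexx ?le_at ?le_tb //.
  move=> x; rewrite in_itv /= derivN hornerN oppr_ge0 => /andP[ax xt]; apply: ltW.
  apply: le_lt_trans dGt.
  by apply: dG_mono; rewrite ?inab ?le_at ?le_tb ?(le_trans (ltW xt) le_tb) ?ltW.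
Qed.

Lemma tail_binom_le (n k : nat) (u v : R) : (k <= n)%N -> 0 <= u -> u <= v -> v <= 1 ->
  tail_binom n.+1 k.+1 u <= tail_binom n.+1 k.+1 v.
Proof.
move=> kn u0 uv v1; have u1 := le_trans uv v1; have v0 := le_trans u0 uv.
rewrite -!horner_tail_poly.
apply: (ler_hornerW (a := 0) (b := 1)); rewrite ?in_itv /= ?u0 ?u1 ?v0 ?v1 //.
move=> x; rewrite in_itv /= => /andP[x0 x1].
rewrite deriv_tail_poly // hornerMn /bernstein hornerMn !hornerE.
by rewrite !(mulrn_wge0, mulr_ge0, exprn_ge0, ltW x0) // subr_ge0 ltW.
Qed.

End PolyExtremum.

Definition error_prob (R : realFieldType) (N K : nat) (P0 P1 u v : R) : R :=
  P0 * tail_binom N K u + P1 * (1 - tail_binom N K v).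

Section MajoritySegment.
Variables (R : rcfType) (n : nat) (P0 P1 : R).
Hypotheses (n_ge2 : (2 <= n)%N) (P0_ge0 : 0 <= P0) (P1_ge0 : 0 <= P1).

Let E := error_prob n.+1 (Kstar n.+1) P0 P1.

Lemma error_prob_lerp_le_max (u0 u1 v0 v1 t : R) :
  0 <= u0 <= 1 / 2 -> 0 <= u1 <= 1 / 2 ->
  (n.+1)%:R <= 2 * n%:R * v0 -> v0 <= 1 ->
  (n.+1)%:R <= 2 * n%:R * v1 -> v1 <= 1 ->
  0 <= t <= 1 ->
  E (u0 + t * (u1 - u0)) (v0 + t * (v1 - v0)) <= Num.max (E u0 v0) (E u1 v1).
Proof.
move=> /andP[u00 u02] /andP[u10 u12] v0n v01 v1n v11 t01.
pose T := tail_poly R n.+1 (Kstar n.+1).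
pose G := P0 *: (T \Po (u0%:P + (u1 - u0) *: 'X)) +
          P1 *: ((1 - T) \Po (v0%:P + (v1 - v0) *: 'X)).
have hG s : G.[s] = E (u0 + s * (u1 - u0)) (v0 + s * (v1 - v0)).
  by rewrite /G /E /error_prob !(hornerE, horner_comp, horner_tail_poly) ![_ * s]mulrC.
have := hG 0; have := hG 1; rewrite !mul0r !mul1r !addr0 !subrKC => <- <-.
rewrite -hG; apply: poly_convex_le_max t01 => x; rewrite in_itv /= => /andP[x0 x1].
rewrite !(derivD, derivZ) !hornerE !horner_deriv2_comp_affine.
rewrite derivB derivC sub0r !derivN hornerN.
have n0 : (0 : R) <= n%:R by [].
apply: addr_ge0; rewrite ?mulrN ?oppr_ge0.
- apply: mulr_ge0 => //; apply: mulr_ge0; first exact: sqr_ge0.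
  by apply: tail_majority_convex => //; apply/andP; split; nra.
- apply: mulr_ge0_le0 => //; apply: mulr_ge0_le0; first exact: sqr_ge0.
  by apply: tail_majority_concave => //; nra.
Qed.

End MajoritySegment.

Section AttackProbabilities.
Variable R : realFieldType.

Lemma pi11_pi10 (alpha q x y : R) : pi11 alpha q x y = pi10 alpha q x y.
Proof. by []. Qed.

Lemma pi10_lerp (alpha q x0 y0 x1 y1 t : R) :
  pi10 alpha q (x0 + t * (x1 - x0)) (y0 + t * (y1 - y0)) =
  pi10 alpha q x0 y0 + t * (pi10 alpha q x1 y1 - pi10 alpha q x0 y0).
Proof. by rewrite /pi10; ring. Qed.

Lemma pi10_bounds (alpha q x y : R) : 0 <= alpha -> 0 <= q <= 1 ->
  0 <= x <= 1 -> 0 <= y <= 1 ->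
  (1 - alpha) * q <= pi10 alpha q x y <= alpha + (1 - alpha) * q.
Proof.
move=> a0 /andP[q0 q1] /andP[x0 x1] /andP[y0 y1].
have s0 : 0 <= x * (1 - q) + (1 - y) * q by rewrite addr_ge0 // mulr_ge0 // subr_ge0.
have s1 : x * (1 - q) + (1 - y) * q <= 1 by nra.
by rewrite /pi10; apply/andP; split; nra.
Qed.

Lemma pi10_le_half (alpha q x y : R) : 0 <= alpha -> 0 <= q -> alpha <= 1 / 2 - q ->
  0 <= x <= 1 -> 0 <= y <= 1 -> 0 <= pi10 alpha q x y <= 1 / 2.
Proof.
move=> a0 q0 aq hx hy; have q01 : 0 <= q <= 1 by rewrite q0 /=; lra.
have /andP[lo hi] := pi10_bounds a0 q01 hx hy.
by apply/andP; split; nra.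
Qed.

Lemma pi10_ge_majority (n : nat) (alpha q x y : R) : 0 <= alpha <= 1 -> 0 <= q <= 1 ->
  (n.+1)%:R <= 2 * n%:R * ((1 - alpha) * q) -> 0 <= x <= 1 -> 0 <= y <= 1 ->
  (n.+1)%:R <= 2 * n%:R * pi10 alpha q x y /\ pi10 alpha q x y <= 1.
Proof.
move=> /andP[a0 a1] q01 nq hx hy; have /andP[lo hi] := pi10_bounds a0 q01 hx hy.
have n0 : (0 : R) <= n%:R by [].
by case/andP: q01 => q0 q1; split; nra.
Qed.

Lemma pi10_00_le_antidiag (alpha q p : R) : 0 <= alpha -> q <= p ->
  pi10 alpha q 0 0 <= pi10 alpha q p (1 - p).
Proof. by move=> a0 qp; rewrite /pi10; nra. Qed.

Lemma pi10_antidiag_self (alpha q : R) : pi10 alpha q q (1 - q) = pi10 alpha q 0 0.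
Proof. by rewrite /pi10; ring. Qed.

Lemma PE_error_prob (N K : nat) (P0 P1 alpha Pf Pd x y : R) :
  PE N K P0 P1 alpha Pf Pd x y =
  error_prob N K P0 P1 (pi10 alpha Pf x y) (pi11 alpha Pd x y).
Proof. by []. Qed.

End AttackProbabilities.

Section MajorityAttack.
Variables (R : rcfType) (n : nat) (P0 P1 Pf Pd alpha : R).
Hypotheses (n_ge2 : (2 <= n)%N) (P0_ge0 : 0 <= P0) (P1_ge0 : 0 <= P1).
Hypotheses (Pf_ge0 : 0 <= Pf) (Pf_le_Pd : Pf <= Pd) (Pd_le1 : Pd <= 1).
Hypotheses (alpha01 : 0 <= alpha <= 1) (alpha_le : alpha <= 1 / 2 - Pf).
Hypothesis Pd_large : (n.+1)%:R <= 2 * n%:R * ((1 - alpha) * Pd).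

Let F := PE n.+1 (Kstar n.+1) P0 P1 alpha Pf Pd.
Let alpha_ge0 : 0 <= alpha := proj1 (andP alpha01).
Let Pd01 : 0 <= Pd <= 1 := introT andP (conj (le_trans Pf_ge0 Pf_le_Pd) Pd_le1).

Lemma PE_lerp_le_max (x0 y0 x1 y1 t : R) :
  0 <= x0 <= 1 -> 0 <= y0 <= 1 -> 0 <= x1 <= 1 -> 0 <= y1 <= 1 -> 0 <= t <= 1 ->
  F (x0 + t * (x1 - x0)) (y0 + t * (y1 - y0)) <= Num.max (F x0 y0) (F x1 y1).
Proof.
move=> hx0 hy0 hx1 hy1 ht; rewrite /F !PE_error_prob !pi11_pi10 !pi10_lerp.
have [v0n v01] := pi10_ge_majority alpha01 Pd01 Pd_large hx0 hy0.
have [v1n v11] := pi10_ge_majority alpha01 Pd01 Pd_large hx1 hy1.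
have u0 := pi10_le_half alpha_ge0 Pf_ge0 alpha_le hx0 hy0.
have u1 := pi10_le_half alpha_ge0 Pf_ge0 alpha_le hx1 hy1.
exact: error_prob_lerp_le_max.
Qed.

Lemma PE00_le_max : F 0 0 <= Num.max (F 1 0) (F 0 1).
Proof.
have i00 : 0 <= (0 : R) <= 1 by rewrite ?lexx ?ler01.
have i11 : 0 <= (1 : R) <= 1 by rewrite ?lexx ?ler01.
have iPd : 0 <= 1 - Pd <= 1 by case/andP: Pd01 => Pd0 Pd1; rewrite subr_ge0 Pd1 gerBl Pd0.
apply: le_trans (PE_lerp_le_max i11 i00 i00 i11 iPd).
have -> : 1 + (1 - Pd) * (0 - 1) = Pd :> R by ring.
have -> : 0 + (1 - Pd) * (1 - 0) = 1 - Pd :> R by ring.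
rewrite /F !PE_error_prob /error_prob !pi11_pi10 pi10_antidiag_self lerD2r.
have /andP[u0 _] := pi10_le_half alpha_ge0 Pf_ge0 alpha_le i00 i00.
have /andP[_ v1] := pi10_le_half alpha_ge0 Pf_ge0 alpha_le Pd01 iPd.
apply: ler_wpM2l => //; apply: tail_binom_le => //; last lra.
- exact: half_succ_le.
- exact: pi10_00_le_antidiag.
Qed.

Lemma PE_le_max_corners (x y : R) : 0 <= x <= 1 -> 0 <= y <= 1 ->
  F x y <= Num.max (F 1 0) (Num.max (F 0 1) (F 1 1)).
Proof.
move=> hx hy.
have i00 : 0 <= (0 : R) <= 1 by rewrite ?lexx ?ler01.
have i11 : 0 <= (1 : R) <= 1 by rewrite ?lexx ?ler01.
have simp := (subr0, subrr, mulr0, mulr1, add0r, addr0).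
have := PE_lerp_le_max i00 hy i11 hy hx; rewrite !simp => hxy.
have := PE_lerp_le_max i00 i00 i00 i11 hy; rewrite !simp => h0y.
have := PE_lerp_le_max i11 i00 i11 i11 hy; rewrite !simp => h1y.
set M := Num.max _ _.
have M10 : F 1 0 <= M by rewrite !le_max lexx.
have M01 : F 0 1 <= M by rewrite !le_max lexx orbT.
have M11 : F 1 1 <= M by rewrite !le_max lexx !orbT.
have M00 : F 0 0 <= M by apply: le_trans PE00_le_max _; rewrite ge_max M10 M01.
apply: (le_trans hxy); rewrite ge_max.
by rewrite (le_trans h0y) ?(le_trans h1y) // ge_max ?M00 ?M01 ?M10 ?M11.
Qed.

End MajorityAttack.

Theorem theorem2 (R : realType) (N : nat) (P0 P1 Pf Pd alpha : R) :
  (2 <= N)%N ->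
  0 < P0 < 1 -> 0 < P1 < 1 -> P0 + P1 = 1 ->
  0 < Pf -> Pf < Pd -> Pd < 1 ->
  0 <= alpha <= 1 ->
  alpha < Num.min (1 / 2 - Pf) (1 - (N%:R / (2 * N%:R - 2)) / Pd) ->
  exists s : R * R,
    [\/ s = (1, 0), s = (0, 1) | s = (1, 1)] /\
    forall P10 P01 : R, 0 <= P10 <= 1 -> 0 <= P01 <= 1 ->
      PE N (Kstar N) P0 P1 alpha Pf Pd P10 P01
        <= PE N (Kstar N) P0 P1 alpha Pf Pd s.1 s.2.
Proof.
move=> N2 /andP[P0_gt0 _] /andP[P1_gt0 _] _ Pf_gt0 Pf_lt_Pd Pd_lt1 alpha01.
rewrite lt_min => /andP[alpha_lt_f alpha_lt_d].
case: N N2 alpha_lt_d => [|n] //; rewrite ltnS => n_ge1 alpha_lt_d.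
have Pd_gt0 : 0 < Pd := lt_trans Pf_gt0 Pf_lt_Pd.
have Pd_large : (n.+1)%:R < 2 * n%:R * ((1 - alpha) * Pd).
  have n_gt0 : (0 : R) < n%:R by rewrite ltr0n.
  have e : 2 * (n.+1)%:R - 2 = 2 * n%:R :> R by rewrite -natr1; ring.
  have : (n.+1)%:R / (2 * n%:R) / Pd < 1 - alpha by rewrite e in alpha_lt_d; lra.
  by rewrite ltr_pdivrMr // ltr_pdivrMr ?mulr_gt0 // mulrC.
(* For N = 2 the threshold N / (2N - 2) is 1, so the hypothesis on alpha is void. *)
have n_ge2 : (2 <= n)%N.
  case: n n_ge1 Pd_large {alpha_lt_d} => [|[|n]] // _; case/andP: alpha01 => a0 _; nra.
pose F := PE n.+1 (Kstar n.+1) P0 P1 alpha Pf Pd.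
have [s Hs sM] : exists2 s : R * R, [\/ s = (1, 0), s = (0, 1) | s = (1, 1)] &
    Num.max (F 1 0) (Num.max (F 0 1) (F 1 1)) <= F s.1 s.2.
  case: (leP (F 0 1) (F 1 1)) => _; case: leP => _.
  - by exists (1, 1); [exact: Or33 | exact: lexx].
  - by exists (1, 0); [exact: Or31 | exact: lexx].
  - by exists (0, 1); [exact: Or32 | exact: lexx].
  - by exists (1, 0); [exact: Or31 | exact: lexx].
exists s; split => // x y hx hy; apply: le_trans sM.
apply: PE_le_max_corners => //; rewrite ?ltW //; lra.
Qed.
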